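(* Let $H$ be a complex infinite-dimensional separable Hilbert space and let $(f_n)_{n=1}^\infty$ be a Bessel sequence in $H$ with optimal Bessel bound $B$ and analysis operator $U$, such that there is a Bessel sequence with analysis operator $V$ for which $I-V^*U$ is compact. Then $d=\dim\operatorname{Ker}U<\infty$, any finite sequence $(x_n)_{n=1}^k$ with $(x_n)_{n=1}^k\cup(f_n)_{n=1}^\infty$ a frame for $H$ satisfies $k\ge d$, and if $(w_1,\dots,w_d)$ is an orthonormal basis of $\operatorname{Ker}U$ then $(\sqrt B w_n)_{n=1}^d\cup(f_n)_{n=1}^\infty$ is a frame for $H$.
   Context: Bessel sequence, frame, optimal Bessel bound as usual; the analysis operator is $U:H\to\ell^2$, $Ux=(\langle x,f_n\rangle)_n$. The notation $(x_n)_{n=1}^k\cup(f_n)_{n=1}^\infty$ denotes the sequence $x_1,\dots,x_k,f_1,f_2,\dots$. *)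

From Stdlib Require Import Reals Lra Lia.
Open Scope R_scope.

Definition Cpx : Type := (R * R)%type.
Definition C0 : Cpx := (0, 0).
Definition C1 : Cpx := (1, 0).
Definition RtoC (r : R) : Cpx := (r, 0).
Definition Cadd (a b : Cpx) : Cpx := (fst a + fst b, snd a + snd b).
Definition Cmul (a b : Cpx) : Cpx :=
  (fst a * fst b - snd a * snd b, fst a * snd b + snd a * fst b).
Definition Cconj (a : Cpx) : Cpx := (fst a, - snd a).
Definition Cabs2 (a : Cpx) : R := fst a * fst a + snd a * snd a.

(** * Complex Hilbert spaces
    Inner product linear in the first argument, conjugate-linear in the second. *)
Record CHilbert := {
  carrier :> Type;
  hzero : carrier;
  hadd : carrier -> carrier -> carrier;
  hopp : carrier -> carrier;
  hscal : Cpx -> carrier -> carrier;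
  inner : carrier -> carrier -> Cpx;
  hadd_assoc : forall x y z, hadd x (hadd y z) = hadd (hadd x y) z;
  hadd_comm : forall x y, hadd x y = hadd y x;
  hadd_zero : forall x, hadd x hzero = x;
  hadd_opp : forall x, hadd x (hopp x) = hzero;
  hscal_assoc : forall a b x, hscal a (hscal b x) = hscal (Cmul a b) x;
  hscal_one : forall x, hscal C1 x = x;
  hscal_distr_vec : forall a x y, hscal a (hadd x y) = hadd (hscal a x) (hscal a y);
  hscal_distr_scal : forall a b x, hscal (Cadd a b) x = hadd (hscal a x) (hscal b x);
  inner_add_l : forall x y z, inner (hadd x y) z = Cadd (inner x z) (inner y z);
  inner_scal_l : forall a x y, inner (hscal a x) y = Cmul a (inner x y);
  inner_conj : forall x y, inner y x = Cconj (inner x y);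
  inner_pos : forall x, 0 <= fst (inner x x);
  inner_def : forall x, inner x x = C0 -> x = hzero;
  hcomplete : forall u : nat -> carrier,
    (forall eps, 0 < eps -> exists N, forall m n, (N <= m)%nat -> (N <= n)%nat ->
        sqrt (fst (inner (hadd (u m) (hopp (u n))) (hadd (u m) (hopp (u n))))) < eps) ->
    exists l, forall eps, 0 < eps -> exists N, forall n, (N <= n)%nat ->
        sqrt (fst (inner (hadd (u n) (hopp l)) (hadd (u n) (hopp l)))) < eps
}.

Section HDefs.
Context {H : CHilbert}.

Definition hsub (x y : H) : H := hadd H x (hopp H y).
Definition normsq (x : H) : R := fst (inner H x x).
Definition hnorm (x : H) : R := sqrt (normsq x).

Fixpoint hfsum (n : nat) (u : nat -> H) : H :=
  match n with
  | O => hzero H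
  | S m => hadd H (hfsum m u) (u m)
  end.

Definition hconv (u : nat -> H) (l : H) : Prop :=
  forall eps, 0 < eps -> exists N, forall n, (N <= n)%nat -> hnorm (hsub (u n) l) < eps.
Definition hseries (u : nat -> H) (s : H) : Prop :=
  hconv (fun n => hfsum n u) s.

Definition separable : Prop :=
  exists D : nat -> H, forall x eps, 0 < eps -> exists n, hnorm (hsub x (D n)) < eps.

Definition lin_indep (n : nat) (v : nat -> H) : Prop :=
  forall c : nat -> Cpx, hfsum n (fun i => hscal H (c i) (v i)) = hzero H ->
    forall i, (i < n)%nat -> c i = C0.

Definition infinite_dimensional : Prop :=
  forall n, exists v : nat -> H, lin_indep n v.

Definition coef_sum (f : nat -> H) (x : H) (l : R) : Prop :=
  infinite_sum (fun n => Cabs2 (inner H x (f n))) l.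

Definition Bessel_bound (f : nat -> H) (B : R) : Prop :=
  forall x, exists l, coef_sum f x l /\ l <= B * normsq x.
Definition Bessel (f : nat -> H) : Prop := exists B, Bessel_bound f B.
Definition optimal_Bessel_bound (f : nat -> H) (B : R) : Prop :=
  Bessel_bound f B /\ forall B', Bessel_bound f B' -> B <= B'.

Definition frame (f : nat -> H) : Prop :=
  exists A B, 0 < A /\ forall x, exists l, coef_sum f x l /\
     A * normsq x <= l /\ l <= B * normsq x.

(** kernel of the analysis operator U x = (<x, f n>)_n *)
Definition kerU (f : nat -> H) (x : H) : Prop := forall n, inner H x (f n) = C0.

(** the synthesis of the analysis: V^* U x = sum_n <x, f n> g n *)
Definition VstarU (g f : nat -> H) (x y : H) : Prop :=
  hseries (fun n => hscal H (inner H x (f n)) (g n)) y.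

Definition compact_op (T : H -> H) : Prop :=
  forall u : nat -> H, (exists M, forall k, hnorm (u k) <= M) ->
    exists (phi : nat -> nat) (y : H),
      (forall k, (phi k < phi (S k))%nat) /\ hconv (fun k => T (u (phi k))) y.

Definition in_span (d : nat) (w : nat -> H) (x : H) : Prop :=
  exists c : nat -> Cpx, x = hfsum d (fun i => hscal H (c i) (w i)).

Definition is_basis_of (S : H -> Prop) (d : nat) (w : nat -> H) : Prop :=
  (forall i, (i < d)%nat -> S (w i)) /\ lin_indep d w /\
  (forall x, S x -> in_span d w x).

Definition has_dim (S : H -> Prop) (d : nat) : Prop :=
  exists w, is_basis_of S d w.

Definition is_ONB_of (S : H -> Prop) (d : nat) (w : nat -> H) : Prop :=
  (forall i, (i < d)%nat -> S (w i)) /\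
  (forall i j, (i < d)%nat -> (j < d)%nat ->
      inner H (w i) (w j) = if Nat.eqb i j then C1 else C0) /\
  (forall x, S x -> in_span d w x).

(** (x_n)_{n<k} ∪ (f_n)_n, indexed by nat *)
Definition prepend (k : nat) (x : nat -> H) (f : nat -> H) : nat -> H :=
  fun n => if Nat.ltb n k then x n else f (n - k)%nat.

End HDefs.

(** - [T] is the identity on [Ker U] (there [V^*U] vanishes), and a compact
      operator fixing an infinite orthonormal sequence cannot exist; hence
      [Ker U] has a finite orthonormal basis [w_0 .. w_(d-1)], so
      [d = dim Ker U] is finite.
    - If [(x_n)_(n<k) ∪ f] is a frame and [k < d], a dimension count yields
      a nonzero [z ∈ Ker U] orthogonal to every [x_n]; all frame
      coefficients of [z] vanish, which contradicts the lower frame bound.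
    - [U] is bounded below on [(Ker U)^⊥] by some [c > 0]: otherwise there
      are unit vectors [y_n ⊥ Ker U] with [‖U y_n‖ → 0], hence
      [‖y_n - T y_n‖ → 0], and a
      subsequence converges by compactness of [T] to a limit lying both in
      [Ker U] and in its orthogonal complement, i.e. to [0]: absurd.
    - Writing this bound as [c‖x - Px‖² ≤ ‖Ux‖²], with [P] the orthogonal
      projection onto [Ker U], we get [c ≤ B] by testing it on a nonzero
      vector orthogonal to [Ker U] (which exists in infinite dimension).
      The frame coefficients of [x] for [(√B w_n) ∪ f] sum to
      [B‖Px‖² + ‖Ux‖²], which lies between [c‖x‖²] and [2B‖x‖²]. *)

(* [Defs] is imported after [Reals] so that its [C0] (complex zero) is not
   shadowed by the one of [Reals]. *)
From Stdlib Require Import Reals Lra Lia ClassicalEpsilon Classical.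
From Pilot Require Import Defs.
Open Scope R_scope.

Arguments hadd_assoc {c} x y z.
Arguments hadd_comm {c} x y.
Arguments hadd_zero {c} x.
Arguments hadd_opp {c} x.
Arguments hscal_assoc {c} a b x.
Arguments hscal_one {c} x.
Arguments hscal_distr_vec {c} a x y.
Arguments hscal_distr_scal {c} a b x.
Arguments inner_add_l {c} x y z.
Arguments inner_scal_l {c} a x y.
Arguments inner_conj {c} x y.
Arguments inner_def {c} x.

Ltac cunf := unfold Cadd, Cmul, Cconj, Cabs2, C0, C1, RtoC in *; simpl in *.

Lemma Cpx_eq (a b : Cpx) : fst a = fst b -> snd a = snd b -> a = b.
Proof. destruct a, b; simpl; intros -> ->; reflexivity. Qed.

Ltac cring :=
  cunf; try apply Cpx_eq; simpl;
  repeat match goal with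
         | |- context [fst ?t] => destruct t; simpl
         | |- context [snd ?t] => destruct t; simpl
         end; ring.

Lemma C1_neq_C0 : C1 <> C0.
Proof. intros E; injection E; lra. Qed.

Lemma Cabs2_nonneg a : 0 <= Cabs2 a.
Proof. destruct a; cunf; nra. Qed.

Lemma Cabs2_zero a : Cabs2 a = 0 -> a = C0.
Proof. destruct a as [a b]; cunf; intros; apply Cpx_eq; simpl; nra. Qed.

Lemma Cabs2_add_le a b : Cabs2 (Cadd a b) <= 2 * Cabs2 a + 2 * Cabs2 b.
Proof.
  destruct a as [a1 a2], b as [b1 b2]; cunf.
  pose proof (Rle_0_sqr (a1 - b1)); pose proof (Rle_0_sqr (a2 - b2)); unfold Rsqr in *; nra.
Qed.

Lemma Cabs2_mul a b : Cabs2 (Cmul a b) = Cabs2 a * Cabs2 b.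
Proof. destruct a, b; cunf; ring. Qed.

Lemma Cabs2_conj a : Cabs2 (Cconj a) = Cabs2 a.
Proof. destruct a; cunf; ring. Qed.

Lemma Cabs2_RtoC r : Cabs2 (RtoC r) = r * r.
Proof. cunf; ring. Qed.

Lemma Cmul_eq0 a b : Cmul a b = C0 -> b <> C0 -> a = C0.
Proof.
  intros E Nb. assert (Hb : 0 < Cabs2 b).
  { destruct (Cabs2_nonneg b) as [|Z]; auto. now destruct (Nb (Cabs2_zero b (eq_sym Z))). }
  apply Cabs2_zero.
  assert (Hm : Cabs2 (Cmul a b) = 0) by (rewrite E; cunf; ring).
  rewrite Cabs2_mul in Hm. nra.
Qed.

Lemma re_mul_le a b t : 0 < t -> 2 * fst (Cmul a b) <= t * Cabs2 a + Cabs2 b / t.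
Proof.
  intros Ht. destruct a as [a1 a2], b as [b1 b2]. cunf.
  assert (E : t * (t * (a1 * a1 + a2 * a2) + (b1 * b1 + b2 * b2) / t - 2 * (a1 * b1 - a2 * b2))
     = (t * a1 - b1) * (t * a1 - b1) + (t * a2 + b2) * (t * a2 + b2)) by (field; lra).
  assert (0 <= t * (t * (a1 * a1 + a2 * a2) + (b1 * b1 + b2 * b2) / t - 2 * (a1 * b1 - a2 * b2)))
    by (rewrite E; pose proof (Rle_0_sqr (t * a1 - b1)); pose proof (Rle_0_sqr (t * a2 + b2));
        unfold Rsqr in *; lra).
  assert (0 <= t * (a1 * a1 + a2 * a2) + (b1 * b1 + b2 * b2) / t - 2 * (a1 * b1 - a2 * b2))
    by (apply (Rmult_le_reg_l t); lra).
  lra.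
Qed.

Section Algebra.
Context {H : CHilbert}.
Implicit Types x y z : H.

Lemma hadd_zero_l x : hadd H (hzero H) x = x.
Proof. rewrite hadd_comm; apply hadd_zero. Qed.

Lemma hadd_cancel x y z : hadd H x y = hadd H x z -> y = z.
Proof.
  intros E.
  assert (E2 : hadd H (hopp H x) (hadd H x y) = hadd H (hopp H x) (hadd H x z)) by now rewrite E.
  now rewrite !hadd_assoc, (hadd_comm (hopp H x) x), hadd_opp, !hadd_zero_l in E2.
Qed.

Lemma zero_unique z : hadd H z z = z -> z = hzero H.
Proof. intros E. apply (hadd_cancel z). now rewrite E, hadd_zero. Qed.

Lemma hscal_zero_c x : hscal H C0 x = hzero H.
Proof. apply zero_unique. rewrite <- hscal_distr_scal. f_equal. cring. Qed.

Lemma hscal_zero_v a : hscal H a (hzero H) = hzero H.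
Proof. apply zero_unique. now rewrite <- hscal_distr_vec, hadd_zero. Qed.

Lemma hopp_scal x : hopp H x = hscal H (-1, 0) x.
Proof.
  apply (hadd_cancel x). rewrite hadd_opp.
  rewrite <- (hscal_one x) at 1. rewrite <- hscal_distr_scal.
  replace (Cadd C1 (-1, 0)) with C0 by cring. now rewrite hscal_zero_c.
Qed.

Lemma hsub_add x y : hadd H (hsub x y) y = x.
Proof.
  unfold hsub. now rewrite <- hadd_assoc, (hadd_comm (hopp H y)), hadd_opp, hadd_zero.
Qed.

Lemma hsub_eq0 x y : hsub x y = hzero H -> x = y.
Proof. intros E. now rewrite <- (hsub_add x y), E, hadd_zero_l. Qed.

Lemma hsub_zero x : hsub x (hzero H) = x.
Proof. unfold hsub. now rewrite hopp_scal, hscal_zero_v, hadd_zero. Qed.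

Lemma hsub_chain x y z : hsub x z = hadd H (hsub x y) (hsub y z).
Proof.
  unfold hsub. rewrite !hadd_assoc. f_equal.
  now rewrite <- hadd_assoc, (hadd_comm (hopp H y)), hadd_opp, hadd_zero.
Qed.

Lemma inner_zero_l y : inner H (hzero H) y = C0.
Proof. rewrite <- (hscal_zero_c y), inner_scal_l. cring. Qed.

Lemma inner_add_r x y z : inner H x (hadd H y z) = Cadd (inner H x y) (inner H x z).
Proof. rewrite inner_conj, inner_add_l, (inner_conj y x), (inner_conj z x). cring. Qed.

Lemma inner_scal_r a x y : inner H x (hscal H a y) = Cmul (Cconj a) (inner H x y).
Proof. rewrite inner_conj, inner_scal_l, (inner_conj y x). cring. Qed.

Lemma inner_sub_l x y z :
  inner H (hsub x y) z = Cadd (inner H x z) (Cmul (-1, 0) (inner H y z)).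
Proof. unfold hsub. now rewrite inner_add_l, hopp_scal, inner_scal_l. Qed.

Lemma inner_self x : inner H x x = (normsq x, 0).
Proof.
  unfold normsq. pose proof (inner_conj x x) as E.
  destruct (inner H x x) as [a b]. cunf. injection E; intros. f_equal. lra.
Qed.

Lemma normsq_nonneg x : 0 <= normsq x.
Proof. apply inner_pos. Qed.

Lemma normsq_zero x : normsq x = 0 -> x = hzero H.
Proof. intros E. apply inner_def. now rewrite inner_self, E. Qed.

Lemma normsq_scal a x : normsq (hscal H a x) = Cabs2 a * normsq x.
Proof. unfold normsq. rewrite inner_scal_l, inner_scal_r, inner_self. cring. Qed.

Lemma normsq_add x y : normsq (hadd H x y) = normsq x + normsq y + 2 * fst (inner H x y).
Proof.
  unfold normsq. rewrite inner_add_l, !inner_add_r, (inner_conj y x).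
  destruct (inner H x y). cunf. ring.
Qed.

Lemma normsq_sub x y : normsq (hsub x y) = normsq x + normsq y - 2 * fst (inner H x y).
Proof.
  unfold hsub. rewrite normsq_add, hopp_scal, normsq_scal, inner_scal_r.
  destruct (inner H x y). cunf. ring.
Qed.

Lemma normsq_sub_sym x y : normsq (hsub x y) = normsq (hsub y x).
Proof. rewrite !normsq_sub, (inner_conj x y). destruct (inner H x y). cunf. ring. Qed.

Lemma normsq_add_le x y : normsq (hadd H x y) <= 2 * normsq x + 2 * normsq y.
Proof.
  pose proof (normsq_add x y). pose proof (normsq_sub x y).
  pose proof (normsq_nonneg (hsub x y)). lra.
Qed.

Lemma normsq_sub_le x y z : normsq (hsub x z) <= 2 * normsq (hsub x y) + 2 * normsq (hsub y z).
Proof. rewrite (hsub_chain x y z). apply normsq_add_le. Qed.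

Lemma pythag x y : inner H x y = C0 -> normsq (hadd H x y) = normsq x + normsq y.
Proof. intros E. rewrite normsq_add, E. cunf. ring. Qed.

Definition normalize x : H := hscal H (RtoC (/ sqrt (normsq x))) x.

Lemma normsq_normalize x : 0 < normsq x -> normsq (normalize x) = 1.
Proof.
  intros Hx. unfold normalize. rewrite normsq_scal, Cabs2_RtoC.
  rewrite <- Rinv_mult, sqrt_sqrt by lra. field. lra.
Qed.

End Algebra.

Fixpoint Csum (n : nat) (a : nat -> Cpx) : Cpx :=
  match n with O => C0 | S m => Cadd (Csum m a) (a m) end.
Fixpoint rsum (n : nat) (a : nat -> R) : R :=
  match n with O => 0 | S m => rsum m a + a m end.

Definition kdelta (i j : nat) : Cpx := if Nat.eqb i j then C1 else C0.

Lemma Csum_ext n a b : (forall i, (i < n)%nat -> a i = b i) -> Csum n a = Csum n b.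
Proof. induction n; simpl; intros E; auto. rewrite IHn, E by (intros; try apply E; lia). auto. Qed.

Lemma rsum_ext n a b : (forall i, (i < n)%nat -> a i = b i) -> rsum n a = rsum n b.
Proof. induction n; simpl; intros E; auto. rewrite IHn, E by (intros; try apply E; lia). auto. Qed.

Lemma Csum_zero n a : (forall i, (i < n)%nat -> a i = C0) -> Csum n a = C0.
Proof. induction n; simpl; intros E; auto. rewrite IHn, E by (intros; try apply E; lia). cring. Qed.

Lemma Csum_fst n a : fst (Csum n a) = rsum n (fun i => fst (a i)).
Proof. induction n; simpl; auto. now rewrite <- IHn. Qed.

Lemma Csum_kdelta n j (c : nat -> Cpx) :
  (j < n)%nat -> Csum n (fun i => Cmul (c i) (kdelta i j)) = c j.
Proof.
  induction n; intros Hj; [lia|]. simpl. unfold kdelta at 2.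
  destruct (Nat.eqb_spec n j).
  - subst. rewrite Csum_zero. cring.
    intros i Hi. unfold kdelta. destruct (Nat.eqb_spec i j); [lia|cring].
  - rewrite IHn by lia. cring.
Qed.

Lemma rsum_nonneg n a : (forall i, 0 <= a i) -> 0 <= rsum n a.
Proof. intros Ha; induction n as [|n IHn]; simpl; [lra|]. specialize (Ha n). lra. Qed.

Lemma rsum_ge_term n a j : (forall i, 0 <= a i) -> (j < n)%nat -> a j <= rsum n a.
Proof.
  intros Ha; induction n as [|n IHn]; intros Hj; [lia|]. simpl. destruct (Nat.eq_dec j n).
  - subst. pose proof (rsum_nonneg n a Ha). lra.
  - pose proof (IHn ltac:(lia)). specialize (Ha n). lra.
Qed.

Lemma rsum_scal n c a : rsum n (fun i => c * a i) = c * rsum n a.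
Proof. induction n; simpl; [ring|]. rewrite IHn. ring. Qed.

Lemma rsum_le n a b : (forall i, a i <= b i) -> rsum n a <= rsum n b.
Proof. intros E; induction n as [|n IHn]; simpl; [lra|]. specialize (E n). lra. Qed.

Lemma rsum_plus n a b : rsum n (fun i => a i + b i) = rsum n a + rsum n b.
Proof. induction n; simpl; [ring|]. rewrite IHn. ring. Qed.

Section HilbertSums.
Context {H : CHilbert}.
Implicit Types x y z : H.

Lemma hfsum_ext n (u v : nat -> H) :
  (forall i, (i < n)%nat -> u i = v i) -> hfsum n u = hfsum n v.
Proof. induction n; simpl; intros E; auto. rewrite IHn, E by (intros; try apply E; lia). auto. Qed.

Lemma hfsum_zero n : hfsum n (fun _ => hzero H) = hzero H.
Proof. induction n; simpl; auto. rewrite IHn. apply hadd_zero. Qed.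

Lemma hfsum_add n (u v : nat -> H) :
  hfsum n (fun i => hadd H (u i) (v i)) = hadd H (hfsum n u) (hfsum n v).
Proof.
  induction n; simpl. { now rewrite hadd_zero. }
  rewrite IHn, <- !hadd_assoc. f_equal. rewrite !hadd_assoc. f_equal. apply hadd_comm.
Qed.

Lemma hfsum_scal n a (u : nat -> H) : hscal H a (hfsum n u) = hfsum n (fun i => hscal H a (u i)).
Proof. induction n; simpl. apply hscal_zero_v. now rewrite hscal_distr_vec, IHn. Qed.

Lemma inner_hfsum_l n (u : nat -> H) y : inner H (hfsum n u) y = Csum n (fun i => inner H (u i) y).
Proof. induction n; simpl. apply inner_zero_l. now rewrite inner_add_l, IHn. Qed.

Definition comb (d : nat) (c : nat -> Cpx) (w : nat -> H) : H :=
  hfsum d (fun i => hscal H (c i) (w i)).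

Lemma inner_comb_l d c w y :
  inner H (comb d c w) y = Csum d (fun i => Cmul (c i) (inner H (w i) y)).
Proof. unfold comb. rewrite inner_hfsum_l. apply Csum_ext. intros. apply inner_scal_l. Qed.

Lemma inner_perp_comb d c w y :
  (forall i, (i < d)%nat -> inner H y (w i) = C0) -> inner H y (comb d c w) = C0.
Proof.
  intros E. rewrite inner_conj, inner_comb_l, Csum_zero. cring.
  intros i Hi. rewrite inner_conj, E by auto. cring.
Qed.

Lemma comb_kdelta n j (w : nat -> H) : (j < n)%nat -> comb n (fun i => kdelta i j) w = w j.
Proof.
  unfold comb, kdelta. induction n; intros Hj; [lia|]. simpl. destruct (Nat.eqb_spec n j).
  - subst. rewrite hscal_one, (hfsum_ext _ _ (fun _ => hzero H)), hfsum_zero by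
      (intros i Hi; destruct (Nat.eqb_spec i j); [lia|apply hscal_zero_c]).
    apply hadd_zero_l.
  - rewrite IHn by lia. rewrite hscal_zero_c. apply hadd_zero.
Qed.

End HilbertSums.

(** ** Orthonormal families and orthogonal projection *)

Section Orthonormal.
Context {H : CHilbert}.
Implicit Types x y z : H.

Definition orthonormal (d : nat) (w : nat -> H) : Prop :=
  forall i j, (i < d)%nat -> (j < d)%nat -> inner H (w i) (w j) = kdelta i j.

Definition proj (d : nat) (w : nat -> H) x : H := comb d (fun i => inner H x (w i)) w.

Lemma inner_comb_orthonormal d c w j :
  orthonormal d w -> (j < d)%nat -> inner H (comb d c w) (w j) = c j.
Proof.
  intros Hw Hj. rewrite inner_comb_l, <- (Csum_kdelta d j c Hj).
  apply Csum_ext. intros i Hi. now rewrite Hw.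
Qed.

Lemma orthonormal_lin_indep d w : orthonormal d w -> lin_indep d w.
Proof.
  intros Hw c E i Hi. pose proof (inner_comb_orthonormal d c w i Hw Hi) as F.
  unfold comb in F. now rewrite E, inner_zero_l in F.
Qed.

Lemma proj_perp d w x j :
  orthonormal d w -> (j < d)%nat -> inner H (hsub x (proj d w x)) (w j) = C0.
Proof.
  intros Hw Hj. unfold proj. rewrite inner_sub_l, inner_comb_orthonormal by auto. cring.
Qed.

Lemma normsq_proj d w x :
  orthonormal d w -> normsq (proj d w x) = rsum d (fun i => Cabs2 (inner H x (w i))).
Proof.
  intros Hw. unfold normsq, proj at 1. rewrite inner_comb_l, Csum_fst. apply rsum_ext.
  intros i Hi. rewrite (inner_conj (proj d w x) (w i)). unfold proj.
  rewrite inner_comb_orthonormal by auto. cring.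
Qed.

Lemma pythag_proj d w x :
  orthonormal d w -> normsq x = normsq (hsub x (proj d w x)) + normsq (proj d w x).
Proof.
  intros Hw. rewrite <- pythag, hsub_add; auto.
  apply inner_perp_comb. intros. now apply proj_perp.
Qed.

Lemma bessel_one d w x j : orthonormal d w -> (j < d)%nat -> Cabs2 (inner H x (w j)) <= normsq x.
Proof.
  intros Hw Hj. rewrite (pythag_proj d w x Hw), (normsq_proj d w x Hw).
  pose proof (normsq_nonneg (hsub x (proj d w x))).
  pose proof (rsum_ge_term d (fun i => Cabs2 (inner H x (w i))) j (fun i => Cabs2_nonneg _) Hj).
  lra.
Qed.

Lemma orthonormal_reindex n m (e : nat -> H) (s : nat -> nat) :
  orthonormal n e -> (forall i, (i < m)%nat -> (s i < n)%nat) ->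
  (forall i j, (i < m)%nat -> (j < m)%nat -> s i = s j -> i = j) ->
  orthonormal m (fun i => e (s i)).
Proof.
  intros He Hs Hinj i j Hi Hj. rewrite He by auto. unfold kdelta.
  destruct (Nat.eqb_spec (s i) (s j)) as [E|E], (Nat.eqb_spec i j) as [F|F]; auto.
  - now destruct F; apply Hinj.
  - now destruct E; subst.
Qed.

End Orthonormal.

(** ** Subspaces, spans and Gram–Schmidt orthonormalisation *)

Section Spans.
Context {H : CHilbert}.
Implicit Types x y z : H.

Definition subsp (S : H -> Prop) : Prop :=
  S (hzero H) /\ (forall x y, S x -> S y -> S (hadd H x y)) /\
  (forall a x, S x -> S (hscal H a x)).

Lemma subsp_sub S x y : subsp S -> S x -> S y -> S (hsub x y).
Proof. intros (H0 & Ha & Hs) ? ?. unfold hsub. rewrite hopp_scal. auto. Qed.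

Lemma comb_in S d c w : subsp S -> (forall i, (i < d)%nat -> S (w i)) -> S (comb d c w).
Proof.
  intros (H0 & Ha & Hs) Hw. unfold comb. induction d; simpl; auto.
  apply Ha; [apply IHd; intros; apply Hw; lia | apply Hs, Hw; lia].
Qed.

Lemma span_subsp d w : subsp (in_span d w).
Proof.
  split; [|split].
  - exists (fun _ => C0). rewrite <- (hfsum_zero d). apply hfsum_ext.
    intros. now rewrite hscal_zero_c.
  - intros x y [c ->] [c' ->]. exists (fun i => Cadd (c i) (c' i)). rewrite <- hfsum_add.
    apply hfsum_ext. intros. symmetry. apply hscal_distr_scal.
  - intros a x [c ->]. exists (fun i => Cmul a (c i)). rewrite hfsum_scal. apply hfsum_ext.
    intros. apply hscal_assoc.
Qed.

Lemma span_in S d w x : subsp S -> (forall i, (i < d)%nat -> S (w i)) -> in_span d w x -> S x.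
Proof. intros HS Hw [c ->]. exact (comb_in S d c w HS Hw). Qed.

Lemma span_elem n (w : nat -> H) j : (j < n)%nat -> in_span n w (w j).
Proof. intros Hj. exists (fun i => kdelta i j). symmetry. now apply comb_kdelta. Qed.

Lemma span_mono n w x : in_span n w x -> in_span (S n) w x.
Proof.
  intros [c ->]. exists (fun i => if Nat.eqb i n then C0 else c i). simpl.
  rewrite Nat.eqb_refl, hscal_zero_c, hadd_zero. apply hfsum_ext. intros i Hi.
  destruct (Nat.eqb_spec i n); [lia|auto].
Qed.

Definition upd (e : nat -> H) (n : nat) y : nat -> H := fun i => if Nat.eqb i n then y else e i.

Lemma orthonormal_upd n e y :
  orthonormal n e -> (forall j, (j < n)%nat -> inner H y (e j) = C0) -> normsq y = 1 ->
  orthonormal (S n) (upd e n y).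
Proof.
  intros He Hy Hy1 i j Hi Hj. unfold upd, kdelta.
  destruct (Nat.eqb_spec i n), (Nat.eqb_spec j n), (Nat.eqb_spec i j); subst; try lia.
  - rewrite inner_self, Hy1. reflexivity.
  - apply Hy; lia.
  - rewrite inner_conj, Hy by lia. cring.
  - rewrite He by lia. unfold kdelta. now rewrite Nat.eqb_refl.
  - rewrite He by lia. unfold kdelta. now destruct (Nat.eqb_spec i j).
Qed.

Lemma orthonormal_extend n e x :
  orthonormal n e -> ~ in_span n e x ->
  exists y, orthonormal (S n) (upd e n y) /\
    (forall S, subsp S -> S x -> (forall i, (i < n)%nat -> S (e i)) -> S y).
Proof.
  intros Hon Hns. set (z := hsub x (proj n e x)).
  assert (Nz : 0 < normsq z).
  { destruct (normsq_nonneg z) as [|E]; auto. exfalso. apply Hns.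
    exists (fun i => inner H x (e i)). apply hsub_eq0, normsq_zero. now symmetry. }
  exists (normalize z). split.
  - apply orthonormal_upd; auto using normsq_normalize.
    intros j Hj. unfold normalize. rewrite inner_scal_l. unfold z. rewrite proj_perp by auto. cring.
  - intros S HS Hx He. apply HS, subsp_sub; auto. unfold proj. now apply comb_in.
Qed.

Lemma lin_indep_restrict n (u : nat -> H) : lin_indep (S n) u -> lin_indep n u.
Proof.
  intros Hl c E i Hi. specialize (Hl (fun i => if Nat.eqb i n then C0 else c i)).
  simpl in Hl. rewrite Nat.eqb_refl, hscal_zero_c, hadd_zero in Hl.
  assert (Hc : forall i, (i < S n)%nat -> (if Nat.eqb i n then C0 else c i) = C0).
  { apply Hl. rewrite <- E. apply hfsum_ext. intros j Hj. destruct (Nat.eqb_spec j n); [lia|auto]. }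
  specialize (Hc i ltac:(lia)). destruct (Nat.eqb_spec i n); [lia|auto].
Qed.

Lemma lin_indep_last n (u : nat -> H) : lin_indep (S n) u -> ~ in_span n u (u n).
Proof.
  intros Hl [a Ea].
  specialize (Hl (fun i => if Nat.eqb i n then (-1, 0) else a i)). simpl in Hl.
  rewrite Nat.eqb_refl in Hl.
  assert (Hs : hfsum n (fun i => hscal H (if Nat.eqb i n then (-1, 0) else a i) (u i)) = u n).
  { rewrite Ea. apply hfsum_ext. intros j Hj. destruct (Nat.eqb_spec j n); [lia|auto]. }
  rewrite Hs, <- hopp_scal, hadd_opp in Hl.
  specialize (Hl eq_refl n ltac:(lia)). rewrite Nat.eqb_refl in Hl.
  injection Hl. lra.
Qed.

Lemma gram_schmidt n (u : nat -> H) :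
  lin_indep n u -> exists e, orthonormal n e /\ forall i, (i < n)%nat -> in_span n u (e i).
Proof.
  induction n; intros Hl.
  - exists u. split; [intros i j Hi; lia | intros; lia].
  - destruct (IHn (lin_indep_restrict n u Hl)) as [e [Hon Hsp]].
    assert (Hns : ~ in_span n e (u n)).
    { intros Hin. apply (lin_indep_last n u Hl). eapply span_in; eauto using span_subsp. }
    destruct (orthonormal_extend n e (u n) Hon Hns) as [y [Hon' Hy]].
    exists (upd e n y). split; auto. intros i Hi. unfold upd. destruct (Nat.eqb_spec i n).
    + apply Hy; auto using span_subsp, span_elem, span_mono.
    + apply span_mono, Hsp. lia.
Qed.

End Spans.

(** ** Dimension counting *)

Section Dimension.
Context {H : CHilbert}.
Implicit Types x y z : H.

Lemma subsp_perp (P : H -> Prop) y : subsp P -> subsp (fun z => P z /\ inner H z y = C0).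
Proof.
  intros (H0 & Ha & Hs). split; [|split].
  - split; auto. apply inner_zero_l.
  - intros v w [Pv Ev] [Pw Ew]. split; auto. rewrite inner_add_l, Ev, Ew. cring.
  - intros c v [Pv Ev]. split; auto. rewrite inner_scal_l, Ev. cring.
Qed.

Lemma lin_indep_nonzero m (u : nat -> H) : (0 < m)%nat -> lin_indep m u -> u 0%nat <> hzero H.
Proof.
  intros Hm Hl Z. apply C1_neq_C0.
  assert (E : comb m (fun i => kdelta i 0) u = hzero H) by now rewrite comb_kdelta.
  exact (Hl _ E 0%nat Hm).
Qed.

(** [i ↦ i] below [j0] and [i ↦ i+1] from [j0] on: enumerates [ℕ ∖ {j0}]. *)
Definition skip (j0 i : nat) : nat := if Nat.ltb i j0 then i else S i.

(** Orthonormalise them to [e]; if some [e_j0] is not orthogonal to [y],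
    eliminate its [y]-component from the others. *)
Lemma hyperplane_section (P : H -> Prop) m (u : nat -> H) y :
  subsp P -> lin_indep (S m) u -> (forall i, (i < S m)%nat -> P (u i)) ->
  exists v, lin_indep m v /\ forall i, (i < m)%nat -> P (v i) /\ inner H (v i) y = C0.
Proof.
  intros HP Hl Hu. destruct (gram_schmidt (S m) u Hl) as [e [Hon Hsp]].
  assert (He : forall i, (i < S m)%nat -> P (e i)) by (intros i Hi; eapply span_in; eauto).
  destruct (classic (exists j0, (j0 < S m)%nat /\ inner H (e j0) y <> C0))
    as [[j0 [Hj0 Ha]]|Hno].
  - set (e' := fun i => e (skip j0 i)).
    assert (Hon' : orthonormal m e').
    { apply (orthonormal_reindex (S m) m e (skip j0)); auto; unfold skip.
      - intros i Hi. destruct (Nat.ltb_spec i j0); lia.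
      - intros i j Hi Hj. destruct (Nat.ltb_spec i j0), (Nat.ltb_spec j j0); lia. }
    assert (Hperp : forall i, (i < m)%nat -> inner H (e j0) (e' i) = C0).
    { intros i Hi. unfold e'. rewrite Hon by (unfold skip; destruct (Nat.ltb_spec i j0); lia).
      unfold kdelta. destruct (Nat.eqb_spec j0 (skip j0 i)) as [E|]; auto.
      unfold skip in E. destruct (Nat.ltb_spec i j0); lia. }
    set (a := inner H (e j0) y).
    exists (fun j => hsub (hscal H a (e' j)) (hscal H (inner H (e' j) y) (e j0))). split.
    + intros b E i Hi. apply (Cmul_eq0 _ a); auto.
      rewrite <- (Csum_kdelta m i (fun j => Cmul (b j) a)) by auto.
      rewrite <- (inner_zero_l (e' i)), <- E, inner_hfsum_l.
      apply Csum_ext. intros j Hj.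
      rewrite inner_scal_l, inner_sub_l, !inner_scal_l, Hon', Hperp by auto. cring.
    + intros j Hj. split.
      * apply subsp_sub; auto; apply HP; apply He; unfold skip;
          destruct (Nat.ltb_spec j j0); lia.
      * rewrite inner_sub_l, !inner_scal_l. unfold a. cring.
  - exists e. split.
    + apply lin_indep_restrict, orthonormal_lin_indep, Hon.
    + intros i Hi. split; [apply He; lia|].
      apply NNPP. intros Hn. apply Hno. exists i. split; auto.
Qed.

Lemma exists_perp_vector k : forall m (P : H -> Prop) (u x : nat -> H),
  (k < m)%nat -> subsp P -> lin_indep m u -> (forall i, (i < m)%nat -> P (u i)) ->
  exists z, P z /\ z <> hzero H /\ forall i, (i < k)%nat -> inner H z (x i) = C0.
Proof.
  induction k as [|k IHk]; intros m P u x Hkm HP Hl Hu.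
  - exists (u 0%nat). split; [apply Hu; lia|]. split; [apply (lin_indep_nonzero m); auto; lia|].
    intros; lia.
  - destruct m as [|m]; [lia|].
    destruct (hyperplane_section P m u (x k) HP Hl Hu) as [v [Hv HvP]].
    destruct (IHk m _ v x ltac:(lia) (subsp_perp P (x k) HP) Hv HvP) as [z [[Pz Ez] [Nz Hz]]].
    exists z. split; auto. split; auto. intros i Hi.
    destruct (Nat.eq_dec i k); subst; auto. apply Hz. lia.
Qed.

End Dimension.

Lemma sum_rsum a n : sum_f_R0 a n = rsum (S n) a.
Proof. induction n; simpl; [ring|]. now rewrite IHn. Qed.

Lemma isum_ext a b l : (forall n, a n = b n) -> infinite_sum a l -> infinite_sum b l.
Proof.
  intros E Ha eps He. destruct (Ha eps He) as [N HN].
  exists N. intros n Hn. rewrite (sum_eq b a) by (intros; auto). auto.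
Qed.

Lemma isum_le a b l m : (forall n, a n <= b n) -> infinite_sum a l -> infinite_sum b m -> l <= m.
Proof. intros E Ha Hb. eapply Rle_cv_lim; [|exact Ha|exact Hb]. intros n. apply sum_Rle. auto. Qed.

Lemma isum_zero : infinite_sum (fun _ => 0) 0.
Proof.
  assert (Z : forall n, sum_f_R0 (fun _ => 0) n = 0) by (induction n; simpl; lra).
  intros eps He. exists 0%nat. intros n _. unfold Rdist. rewrite Z, Rminus_0_r, Rabs_R0. auto.
Qed.

Lemma isum_scal c a l : infinite_sum a l -> infinite_sum (fun n => c * a n) (c * l).
Proof.
  intros Ha. assert (Hc : Un_cv (fun _ => c) c).
  { intros e He. exists 0%nat. intros n _. unfold Rdist. now rewrite Rminus_diag, Rabs_R0. }
  intros eps He. destruct (CV_mult _ _ _ _ Hc Ha eps He) as [N HN].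
  exists N. intros n Hn.
  replace (sum_f_R0 (fun n => c * a n) n) with (c * sum_f_R0 a n); auto.
  rewrite scal_sum. apply sum_eq. intros; ring.
Qed.

Lemma isum_plus a b l m :
  infinite_sum a l -> infinite_sum b m -> infinite_sum (fun n => a n + b n) (l + m).
Proof.
  intros Ha Hb eps He. destruct (CV_plus _ _ _ _ Ha Hb eps He) as [N HN].
  exists N. intros n Hn. rewrite sum_plus. auto.
Qed.

Lemma rsum_le_isum a l N : (forall n, 0 <= a n) -> infinite_sum a l -> rsum N a <= l.
Proof.
  intros Ha Hs. apply Rle_trans with (rsum (S N) a).
  - simpl. specialize (Ha N). lra.
  - rewrite <- sum_rsum. apply sum_incr; auto.
Qed.

Lemma term_le_isum a l n : (forall n, 0 <= a n) -> infinite_sum a l -> a n <= l.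
Proof.
  intros Ha Hs. apply Rle_trans with (rsum (S n) a).
  - simpl. pose proof (rsum_nonneg n a Ha). lra.
  - now apply rsum_le_isum.
Qed.

Lemma isum_prepend d a s l :
  infinite_sum s l ->
  infinite_sum (fun n => if Nat.ltb n d then a n else s (n - d)%nat) (rsum d a + l).
Proof.
  intros Hs. set (t := fun n => if Nat.ltb n d then a n else s (n - d)%nat).
  assert (E : forall m, sum_f_R0 t (d + m) = rsum d a + sum_f_R0 s m).
  { induction m.
    - rewrite sum_rsum, Nat.add_0_r. simpl.
      rewrite (rsum_ext d t a) by (intros i Hi; unfold t; destruct (Nat.ltb_spec i d); [auto|lia]).
      unfold t. destruct (Nat.ltb_spec d d); [lia|]. now rewrite Nat.sub_diag.
    - rewrite Nat.add_succ_r. simpl. rewrite IHm. unfold t.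
      destruct (Nat.ltb_spec (S (d + m)) d); [lia|].
      replace (S (d + m) - d)%nat with (S m) by lia. ring. }
  intros eps He. destruct (Hs eps He) as [N HN].
  exists (d + N)%nat. intros n Hn. replace n with (d + (n - d))%nat by lia. rewrite E.
  unfold Rdist. replace (rsum d a + sum_f_R0 s (n - d) - (rsum d a + l))
    with (sum_f_R0 s (n - d) - l) by ring.
  apply HN. lia.
Qed.

Lemma small_zero r : 0 <= r -> (forall eps, 0 < eps -> r < eps) -> r = 0.
Proof. intros [Hr|Hr] Hs; auto. specialize (Hs r Hr). lra. Qed.

Lemma inv_small d : 0 < d -> exists N, forall n, (N <= n)%nat -> / (INR n + 1) < d.
Proof.
  intros Hd. destruct (INR_unbounded (/ d)) as [N HN]. exists N. intros n Hn.
  apply le_INR in Hn. pose proof (pos_INR N). pose proof (Rinv_0_lt_compat d Hd).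
  rewrite <- (Rinv_inv d). apply Rinv_lt_contravar; nra.
Qed.

Lemma strict_incr_ge (phi : nat -> nat) :
  (forall k, (phi k < phi (S k))%nat) -> forall k, (k <= phi k)%nat.
Proof. intros Hp k. induction k; [lia|]. specialize (Hp k). lia. Qed.

Lemma choice_fun {A B : Type} (P : A -> B -> Prop) :
  (forall a, exists b, P a b) -> exists F : A -> B, forall a, P a (F a).
Proof.
  intros Hex. exists (fun a => proj1_sig (constructive_indefinite_description _ (Hex a))).
  intros a. exact (proj2_sig (constructive_indefinite_description _ (Hex a))).
Qed.

Section Convergence.
Context {H : CHilbert}.

Definition nconv (u : nat -> H) (l : H) : Prop :=
  forall eps, 0 < eps -> exists N, forall n, (N <= n)%nat -> normsq (hsub (u n) l) < eps.

Lemma hconv_nconv u l : hconv u l -> nconv u l.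
Proof.
  intros Hc eps He. destruct (Hc (sqrt eps) (sqrt_lt_R0 _ He)) as [N HN]. exists N.
  intros n Hn. specialize (HN n Hn). unfold hnorm in HN.
  pose proof (normsq_nonneg (hsub (u n) l)).
  apply sqrt_lt_0_alt in HN. lra.
Qed.

Lemma hconv_zero_limit (u : nat -> H) l : (forall n, u n = hzero H) -> hconv u l -> l = hzero H.
Proof.
  intros Z Hc. apply hconv_nconv in Hc. apply normsq_zero, small_zero; [apply normsq_nonneg|].
  intros eps He. destruct (Hc eps He) as [N HN]. specialize (HN N (Nat.le_refl N)).
  rewrite Z, normsq_sub_sym, hsub_zero in HN. exact HN.
Qed.

Lemma nconv_perp (u : nat -> H) y d w i :
  orthonormal d w -> (i < d)%nat -> (forall n, inner H (u n) (w i) = C0) -> nconv u y ->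
  inner H y (w i) = C0.
Proof.
  intros Hon Hi Hu Hyc. apply Cabs2_zero, small_zero; [apply Cabs2_nonneg|]. intros eps He.
  destruct (Hyc (eps / 4) ltac:(lra)) as [N HN]. specialize (HN N (Nat.le_refl _)).
  rewrite <- (hsub_add y (u N)), inner_add_l, Hu.
  eapply Rle_lt_trans; [apply Cabs2_add_le|].
  pose proof (bessel_one d w (hsub y (u N)) i Hon Hi) as Hb. rewrite normsq_sub_sym in Hb.
  replace (Cabs2 C0) with 0 by (cunf; ring). lra.
Qed.

End Convergence.

(** [Sf x] is the value of [Σ_n |<x, f_n>|² = ‖Ux‖²]. *)
Section CoefficientSums.
Context {H : CHilbert} (f : nat -> H) (Sf : H -> R).
Hypothesis HSf : forall x, coef_sum f x (Sf x).

Lemma Sf_nonneg x : 0 <= Sf x.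
Proof. apply (isum_le (fun _ => 0) _ _ _ (fun n => Cabs2_nonneg _) isum_zero (HSf x)). Qed.

Lemma Sf_term x n : Cabs2 (inner H x (f n)) <= Sf x.
Proof.
  apply (term_le_isum (fun n => Cabs2 (inner H x (f n)))); [intros; apply Cabs2_nonneg | apply HSf].
Qed.

Lemma Sf_le_bound B x : Bessel_bound f B -> Sf x <= B * normsq x.
Proof.
  intros HB. destruct (HB x) as [l [Hl Hle]].
  now rewrite (uniqueness_sum _ (Sf x) l (HSf x) Hl).
Qed.

Lemma Sf_scale x y c :
  (forall n, Cabs2 (inner H x (f n)) = c * Cabs2 (inner H y (f n))) -> Sf x = c * Sf y.
Proof.
  intros E. apply (uniqueness_sum (fun n => Cabs2 (inner H x (f n)))); [apply HSf|].
  apply (isum_ext (fun n => c * Cabs2 (inner H y (f n)))); [now intros|]. apply isum_scal, HSf.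
Qed.

Lemma Sf_add_le x y : Sf (hadd H x y) <= 2 * Sf x + 2 * Sf y.
Proof.
  apply (isum_le (fun n => Cabs2 (inner H (hadd H x y) (f n)))
                 (fun n => 2 * Cabs2 (inner H x (f n)) + 2 * Cabs2 (inner H y (f n)))).
  - intros n. rewrite inner_add_l. apply Cabs2_add_le.
  - apply HSf.
  - apply isum_plus; apply isum_scal, HSf.
Qed.

Lemma Sf_zero_ker x : Sf x = 0 -> kerU f x.
Proof.
  intros S0 n. apply Cabs2_zero, Rle_antisym; [rewrite <- S0; apply Sf_term | apply Cabs2_nonneg].
Qed.

Lemma Sf_normalize z : 0 < normsq z -> Sf (normalize z) = Sf z / normsq z.
Proof.
  intros Hz. unfold Rdiv. rewrite Rmult_comm. apply Sf_scale. intros n.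
  unfold normalize. rewrite inner_scal_l, Cabs2_mul, Cabs2_RtoC.
  rewrite <- Rinv_mult, sqrt_sqrt by lra. reflexivity.
Qed.

Lemma Sf_sub_ker x p : kerU f p -> Sf (hsub x p) = Sf x.
Proof.
  intros Hp. rewrite <- (Rmult_1_l (Sf x)). apply Sf_scale. intros n.
  rewrite inner_sub_l, (Hp n). f_equal. cring.
Qed.

End CoefficientSums.

Lemma subsp_ker {H : CHilbert} (f : nat -> H) : subsp (kerU f).
Proof.
  split; [|split].
  - intros n. apply inner_zero_l.
  - intros x y Hx Hy n. rewrite inner_add_l, Hx, Hy. cring.
  - intros a x Hx n. rewrite inner_scal_l, Hx. cring.
Qed.

Lemma Bessel_pos_bound {H : CHilbert} (g : nat -> H) :
  Bessel g -> exists B, 0 < B /\ Bessel_bound g B.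
Proof.
  intros [B0 HB0]. exists (Rabs B0 + 1). split; [pose proof (Rabs_pos B0); lra|].
  intros x. destruct (HB0 x) as [l [Hl Hle]]. exists l. split; auto.
  pose proof (Rle_abs B0). pose proof (normsq_nonneg x). nra.
Qed.

(** ** Boundedness of [V^*U] in terms of [‖Ux‖] *)

Section Synthesis.
Context {H : CHilbert} (f g : nat -> H) (Bg : R).
Hypothesis HBg : Bessel_bound g Bg.
Hypothesis HBgp : 0 < Bg.

(** Against any [v], the partial sums [u_N = Σ_(n<N) <z, f_n> g_n] satisfy
    [2 Re <u_N, v> ≤ Bg‖Uz‖² + ‖v‖²] (Cauchy–Schwarz, in AM–GM form). *)
Lemma partial_synthesis_inner_le z v l N :
  coef_sum f z l ->
  2 * fst (inner H (hfsum N (fun n => hscal H (inner H z (f n)) (g n))) v) <= Bg * l + normsq v.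
Proof.
  intros Hl. destruct (HBg v) as [lg [Hlg Hlgb]].
  rewrite inner_hfsum_l, Csum_fst, <- rsum_scal.
  eapply Rle_trans.
  { apply (rsum_le N _ (fun i => Bg * Cabs2 (inner H z (f i)) + Cabs2 (inner H v (g i)) / Bg)).
    intros i. rewrite inner_scal_l, (inner_conj v (g i)), <- (Cabs2_conj (inner H v (g i))).
    now apply re_mul_le. }
  rewrite rsum_plus, rsum_scal.
  assert (E1 : rsum N (fun i => Cabs2 (inner H z (f i))) <= l)
    by (apply rsum_le_isum; auto using Cabs2_nonneg).
  assert (E2 : rsum N (fun i => Cabs2 (inner H v (g i))) <= lg)
    by (apply rsum_le_isum; auto using Cabs2_nonneg).
  rewrite (rsum_ext N (fun i => Cabs2 (inner H v (g i)) / Bg)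
                     (fun i => / Bg * Cabs2 (inner H v (g i))))
    by (intros; cbv beta; unfold Rdiv; ring).
  rewrite rsum_scal.
  assert (/ Bg * rsum N (fun i => Cabs2 (inner H v (g i))) <= normsq v).
  { apply Rle_trans with (/ Bg * (Bg * normsq v)).
    - apply Rmult_le_compat_l; [left; now apply Rinv_0_lt_compat | lra].
    - right. field. lra. }
  nra.
Qed.

Lemma VstarU_normsq_le z v l : VstarU g f z v -> coef_sum f z l -> normsq v <= 2 * Bg * l.
Proof.
  intros Hv Hl. apply hconv_nconv in Hv.
  set (u := fun k => hfsum k (fun n => hscal H (inner H z (f n)) (g n))).
  assert (C : forall k, normsq v <= 2 * Bg * l + 4 * normsq (hsub (u k) v)).
  { intros k. pose proof (partial_synthesis_inner_le z v l k Hl). pose proof (normsq_sub (u k) v).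
    pose proof (normsq_add_le (hsub v (u k)) (u k)).
    rewrite hsub_add, (normsq_sub_sym v) in *. unfold u in *. lra. }
  destruct (Rle_or_lt (normsq v) (2 * Bg * l)) as [|Hlt]; auto. exfalso.
  destruct (Hv ((normsq v - 2 * Bg * l) / 8) ltac:(lra)) as [N HN].
  specialize (HN N (Nat.le_refl _)). specialize (C N). unfold u in C. lra.
Qed.

End Synthesis.

(** ** Finite dimensionality of the kernel *)

Section FiniteKernel.
Context {H : CHilbert}.

Lemma defect_fixes_ker (g f : nat -> H) (T : H -> H) :
  (forall x, VstarU g f x (hsub x (T x))) -> forall x, kerU f x -> T x = x.
Proof.
  intros HT x Hx. symmetry. apply hsub_eq0. refine (hconv_zero_limit _ _ _ (HT x)).
  intros n. rewrite <- (hfsum_zero n). apply hfsum_ext. intros i _. rewrite Hx. apply hscal_zero_c.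
Qed.

Definition orthonormal_seq (e : nat -> H) : Prop := forall i j, inner H (e i) (e j) = kdelta i j.

Lemma orthonormal_seq_dist e i j : orthonormal_seq e -> i <> j -> normsq (hsub (e i) (e j)) = 2.
Proof.
  intros He Hij. rewrite normsq_sub. unfold normsq. rewrite !He. unfold kdelta.
  rewrite !Nat.eqb_refl. destruct (Nat.eqb_spec i j); [lia|]. cunf. ring.
Qed.

(** A compact operator cannot fix every member of an orthonormal sequence:
    no subsequence of such a sequence converges. *)
Lemma compact_no_fixed_orthonormal_seq (T : H -> H) e :
  compact_op T -> orthonormal_seq e -> (forall i, T (e i) = e i) -> False.
Proof.
  intros Hc He HT. destruct (Hc e) as [phi [y [Hphi Hconv]]].
  { exists 1. intros k. unfold hnorm, normsq. rewrite He. unfold kdelta.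
    rewrite Nat.eqb_refl. simpl. rewrite sqrt_1. lra. }
  apply hconv_nconv in Hconv. destruct (Hconv (1/4) ltac:(lra)) as [N HN].
  pose proof (HN N (Nat.le_refl _)) as D1. pose proof (HN (S N) ltac:(lia)) as D2.
  rewrite HT in D1, D2. rewrite normsq_sub_sym in D2.
  pose proof (normsq_sub_le (e (phi N)) y (e (phi (S N)))) as D3.
  rewrite (orthonormal_seq_dist e) in D3 by (auto; specialize (Hphi N); lia). lra.
Qed.

(** Successive Gram–Schmidt extensions inside [K] assemble into an
    orthonormal sequence. *)
Fixpoint extend_iter (F : nat -> (nat -> H) -> H) (n : nat) : nat -> H :=
  match n with O => fun _ => hzero H | S m => upd (extend_iter F m) m (F m (extend_iter F m)) end.

Lemma extend_iter_stable F n i : (i < n)%nat -> extend_iter F n i = extend_iter F (S i) i.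
Proof.
  induction n; intros Hi; [lia|]. destruct (Nat.eq_dec i n); [now subst|].
  simpl. unfold upd at 1. destruct (Nat.eqb_spec i n); [lia|]. apply IHn. lia.
Qed.

Lemma orthonormal_seq_build (K : H -> Prop) :
  (forall n e, orthonormal n e -> (forall i, (i < n)%nat -> K (e i)) ->
     exists y, K y /\ orthonormal (S n) (upd e n y)) ->
  exists e, orthonormal_seq e /\ forall i, K (e i).
Proof.
  intros Hext.
  set (Inv := fun n e => orthonormal n e /\ forall i, (i < n)%nat -> K (e i)).
  destruct (choice_fun (fun p y =>
              Inv (fst p) (snd p) -> K y /\ orthonormal (S (fst p)) (upd (snd p) (fst p) y)))
    as [F0 HF].
  { intros [n e]. destruct (classic (Inv n e)) as [[Hon Hk]|Hn].
    - destruct (Hext n e Hon Hk) as [y Hy]. now exists y.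
    - exists (hzero H). now intros. }
  set (F := fun n e => F0 (n, e)).
  assert (Hinv : forall n, Inv n (extend_iter F n)).
  { induction n as [|n IHn].
    - split; [intros i j Hi | intros i Hi]; lia.
    - destruct (HF (n, extend_iter F n) IHn) as [Hk Hon]. split; [exact Hon|].
      intros i Hi. simpl. unfold upd. destruct (Nat.eqb_spec i n); auto. apply IHn. lia. }
  exists (fun i => extend_iter F (S i) i). split.
  - intros i j. rewrite <- (extend_iter_stable F (S (Nat.max i j)) i),
      <- (extend_iter_stable F (S (Nat.max i j)) j) by lia.
    apply (proj1 (Hinv _)); lia.
  - intros i. apply (proj2 (Hinv (S i))). lia.
Qed.

Lemma compact_identity_finite_dim (K : H -> Prop) (T : H -> H) :
  subsp K -> compact_op T -> (forall x, K x -> T x = x) ->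
  exists d w, orthonormal d w /\ (forall i, (i < d)%nat -> K (w i)) /\
              forall x, K x -> in_span d w x.
Proof.
  intros HK Hc HT. apply NNPP. intros Hno.
  destruct (orthonormal_seq_build K) as [e [He HeK]].
  - intros n e Hon Hk.
    destruct (classic (exists x, K x /\ ~ in_span n e x)) as [[x [Kx Hs]]|Hall].
    + destruct (orthonormal_extend n e x Hon Hs) as [y [Hon' Hy]].
      exists y. split; [apply Hy|]; auto.
    + exfalso. apply Hno. exists n, e. repeat split; auto.
      intros x Kx. apply NNPP. intros Hs. apply Hall. eauto.
  - apply (compact_no_fixed_orthonormal_seq T e Hc He). auto.
Qed.

End FiniteKernel.

(** ** [U] is bounded below on the orthogonal complement of its kernel *)

Section BoundedBelow.
Context {H : CHilbert} (f g : nat -> H) (T : H -> H) (Sf : H -> R) (Bf Bg : R).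
Hypothesis HSf : forall x, coef_sum f x (Sf x).
Hypothesis HBf : Bessel_bound f Bf.
Hypothesis HBfp : 0 < Bf.
Hypothesis HBg : Bessel_bound g Bg.
Hypothesis HBgp : 0 < Bg.
Hypothesis Hc : compact_op T.
Hypothesis HT : forall x, VstarU g f x (hsub x (T x)).

(** Unit vectors along which [U] is small converge along a subsequence:
    [y_n - T y_n = V^*U y_n] tends to 0 and [T] is compact. *)
Lemma small_image_subseq_converges (ys : nat -> H) :
  (forall n, normsq (ys n) = 1) -> (forall n, Sf (ys n) < / (INR n + 1)) ->
  exists phi y, (forall k, (phi k < phi (S k))%nat) /\ nconv (fun k => ys (phi k)) y.
Proof.
  intros Hy1 Hys. destruct (Hc ys) as [phi [y [Hphi Hconv]]].
  { exists 1. intros k. unfold hnorm. rewrite Hy1, sqrt_1. lra. }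
  apply hconv_nconv in Hconv. exists phi, y. split; auto.
  intros eps He. destruct (Hconv (eps / 4) ltac:(lra)) as [N1 HN1].
  destruct (inv_small (eps / (8 * Bg))) as [N2 HN2]; [apply Rdiv_lt_0_compat; lra|].
  exists (Nat.max N1 N2). intros n Hn.
  pose proof (normsq_sub_le (ys (phi n)) (T (ys (phi n))) y).
  pose proof (VstarU_normsq_le f g Bg HBg HBgp _ _ _ (HT (ys (phi n))) (HSf (ys (phi n)))).
  specialize (HN1 n ltac:(lia)). pose proof (strict_incr_ge phi Hphi n).
  specialize (HN2 (phi n) ltac:(lia)). specialize (Hys (phi n)).
  assert (2 * Bg * Sf (ys (phi n)) < 2 * Bg * (eps / (8 * Bg))) by (apply Rmult_lt_compat_l; lra).
  assert (2 * Bg * (eps / (8 * Bg)) = eps / 4) by (field; lra). lra.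
Qed.

(** Such a limit lies in [Ker U], since [‖U·‖²] is continuous. *)
Lemma small_image_limit_in_ker (ys : nat -> H) phi y :
  (forall n, Sf (ys n) < / (INR n + 1)) -> (forall k, (phi k < phi (S k))%nat) ->
  nconv (fun k => ys (phi k)) y -> kerU f y.
Proof.
  intros Hys Hphi Hyc. apply (Sf_zero_ker f Sf HSf).
  apply small_zero; [apply (Sf_nonneg f Sf HSf)|]. intros eps He.
  destruct (Hyc (eps / (8 * Bf))) as [N1 HN1]; [apply Rdiv_lt_0_compat; lra|].
  destruct (inv_small (eps / 8)) as [N2 HN2]; [lra|].
  set (n := Nat.max N1 N2). specialize (HN1 n ltac:(lia)). pose proof (strict_incr_ge phi Hphi n).
  specialize (HN2 (phi n) ltac:(lia)). specialize (Hys (phi n)).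
  pose proof (Sf_add_le f Sf HSf (hsub y (ys (phi n))) (ys (phi n))) as Ha. rewrite hsub_add in Ha.
  pose proof (Sf_le_bound f Sf HSf Bf (hsub y (ys (phi n))) HBf) as Hb.
  rewrite normsq_sub_sym in Hb.
  assert (Bf * normsq (hsub (ys (phi n)) y) < Bf * (eps / (8 * Bf)))
    by (apply Rmult_lt_compat_l; lra).
  assert (Bf * (eps / (8 * Bf)) = eps / 8) by (field; lra). lra.
Qed.

Section KernelBasis.
Variables (d : nat) (w : nat -> H).
Hypothesis Hon : orthonormal d w.
Hypothesis Hwk : forall i, (i < d)%nat -> kerU f (w i).
Hypothesis Hsp : forall x, kerU f x -> in_span d w x.

Lemma proj_in_ker x : kerU f (proj d w x).
Proof. unfold proj. apply comb_in; auto using subsp_ker. Qed.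

Lemma small_image_unit_seq :
  ~ (exists c, 0 < c /\ forall x, c * normsq (hsub x (proj d w x)) <= Sf x) ->
  exists ys : nat -> H, forall n, normsq (ys n) = 1 /\
    (forall i, (i < d)%nat -> inner H (ys n) (w i) = C0) /\ Sf (ys n) < / (INR n + 1).
Proof.
  intros Hno.
  apply (choice_fun (fun n y => normsq y = 1 /\
    (forall i, (i < d)%nat -> inner H y (w i) = C0) /\ Sf y < / (INR n + 1))). intros n.
  assert (Hinv : 0 < / (INR n + 1)) by (apply Rinv_0_lt_compat; pose proof (pos_INR n); lra).
  destruct (classic (exists x, Sf x < / (INR n + 1) * normsq (hsub x (proj d w x))))
    as [[x Hx]|Hall].
  2:{ exfalso. apply Hno. exists (/ (INR n + 1)). split; auto.
      intros x. apply Rnot_lt_le. intros Hl. apply Hall. eauto. }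
  set (z := hsub x (proj d w x)) in Hx.
  assert (Hz : 0 < normsq z).
  { pose proof (Sf_nonneg f Sf HSf x). destruct (normsq_nonneg z) as [|E]; auto.
    rewrite <- E in Hx. lra. }
  exists (normalize z). split; [|split].
  - now apply normsq_normalize.
  - intros i Hi. unfold normalize. rewrite inner_scal_l. unfold z. rewrite proj_perp by auto. cring.
  - rewrite (Sf_normalize f Sf HSf) by auto. unfold z.
    rewrite (Sf_sub_ker f Sf HSf) by apply proj_in_ker.
    apply (Rmult_lt_reg_r (normsq z)); auto. unfold Rdiv.
    rewrite Rmult_assoc, Rinv_l by lra. fold z. lra.
Qed.

Lemma analysis_bounded_below :
  exists c, 0 < c /\ forall x, c * normsq (hsub x (proj d w x)) <= Sf x.
Proof.
  apply NNPP. intros Hno.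
  destruct (small_image_unit_seq Hno) as [ys Hys].
  destruct (small_image_subseq_converges ys) as [phi [y [Hphi Hyc]]]; try apply Hys.
  assert (HyK : kerU f y) by (apply (small_image_limit_in_ker ys phi y); auto; apply Hys).
  assert (Y0 : y = hzero H).
  { destruct (Hsp y HyK) as [c Ec]. apply inner_def. rewrite Ec at 2.
    apply inner_perp_comb. intros i Hi.
    apply (nconv_perp (fun k => ys (phi k)) y d w i Hon Hi); auto. intros; apply Hys; auto. }
  destruct (Hyc (1/2) ltac:(lra)) as [N HN]. specialize (HN N (Nat.le_refl _)).
  rewrite Y0, hsub_zero, (proj1 (Hys (phi N))) in HN. lra.
Qed.

End KernelBasis.

End BoundedBelow.

(** ** Frames obtained by prepending finitely many vectors *)

Section Frames.
Context {H : CHilbert} (f : nat -> H) (Sf : H -> R).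
Hypothesis HSf : forall y, coef_sum f y (Sf y).

Lemma coef_sum_prepend k x y :
  coef_sum (prepend k x f) y (rsum k (fun n => Cabs2 (inner H y (x n))) + Sf y).
Proof.
  unfold coef_sum. eapply isum_ext; [|apply isum_prepend, HSf].
  intros n. unfold prepend. now destruct (Nat.ltb n k).
Qed.

(** If [(x_n)_(n<k) ∪ f] is a frame, then [k] is at least the number of
    independent vectors in [Ker U]: otherwise some nonzero [z ∈ Ker U] is
    orthogonal to all [x_n], so all its frame coefficients vanish. *)
Lemma frame_prepend_length k x d w :
  frame (prepend k x f) -> lin_indep d w -> (forall i, (i < d)%nat -> kerU f (w i)) -> (d <= k)%nat.
Proof.
  intros [A [B' [HA Hfr]]] Hl Hw. apply NNPP. intros Hk.
  destruct (exists_perp_vector k d (kerU f) w x) as [z [Kz [Nz Hz]]];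
    auto using subsp_ker; try lia.
  destruct (Hfr z) as [l [Hl0 [Hlo _]]].
  assert (L0 : l = 0).
  { apply (uniqueness_sum (fun n => Cabs2 (inner H z (prepend k x f n)))); auto.
    apply (isum_ext (fun _ => 0)); [|apply isum_zero]. intros n. unfold prepend.
    destruct (Nat.ltb_spec n k); [rewrite Hz by auto | rewrite Kz]; cunf; ring. }
  subst l. apply Nz, normsq_zero. pose proof (normsq_nonneg z). nra.
Qed.

Lemma proj_of_perp d w z :
  (forall i, (i < d)%nat -> inner H z (w i) = C0) -> proj d w z = hzero H.
Proof.
  intros Hz. unfold proj, comb. rewrite <- (hfsum_zero d). apply hfsum_ext.
  intros i Hi. rewrite Hz by auto. apply hscal_zero_c.
Qed.

(** In infinite dimension some nonzero vector is orthogonal to the finite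
    family [w], so a lower bound on [(span w)^⊥] is below any upper bound. *)
Lemma lower_bound_le_upper_bound d w c B :
  @infinite_dimensional H -> (forall x, c * normsq (hsub x (proj d w x)) <= Sf x) ->
  (forall x, Sf x <= B * normsq x) -> c <= B.
Proof.
  intros Hinf Hcr HSB. destruct (Hinf (S d)) as [v Hv].
  destruct (exists_perp_vector d (S d) (fun _ => True) v w) as [z [_ [Nz Hz]]]; auto.
  { repeat split; auto. }
  specialize (Hcr z). rewrite proj_of_perp, hsub_zero in Hcr by auto. specialize (HSB z).
  destruct (normsq_nonneg z) as [Hp|Hp]; [nra|].
  exfalso. apply Nz, normsq_zero. auto.
Qed.

(** Prepending [√B w_n] for an orthonormal basis [w] of [Ker U] yields a
    frame, with bounds [c] and [2B]: its coefficient sum at [x] is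
    [B‖Px‖² + ‖Ux‖²]. *)
Lemma frame_prepend_scaled_basis d w c B :
  orthonormal d w -> 0 < c -> c <= B -> (forall x, Sf x <= B * normsq x) ->
  (forall x, c * normsq (hsub x (proj d w x)) <= Sf x) ->
  frame (prepend d (fun n => hscal H (RtoC (sqrt B)) (w n)) f).
Proof.
  intros Hon Hc HcB HSB Hcr. exists c, (2 * B). split; auto.
  intros x. eexists. split; [apply coef_sum_prepend|].
  assert (Ea : rsum d (fun n => Cabs2 (inner H x (hscal H (RtoC (sqrt B)) (w n))))
               = B * normsq (proj d w x)).
  { rewrite normsq_proj, <- rsum_scal by auto. apply rsum_ext. intros i Hi.
    rewrite inner_scal_r, Cabs2_mul, Cabs2_conj, Cabs2_RtoC, sqrt_sqrt by lra. reflexivity. }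
  cbv beta. rewrite Ea, (pythag_proj d w x Hon).
  pose proof (Hcr x). pose proof (HSB x) as Hup. rewrite (pythag_proj d w x Hon) in Hup.
  pose proof (normsq_nonneg (hsub x (proj d w x))). pose proof (normsq_nonneg (proj d w x)).
  split; nra.
Qed.

End Frames.

Theorem mainTheorem4 (H : CHilbert)
  (Hsep : @separable H) (Hinf : @infinite_dimensional H)
  (f : nat -> H) (B : R)
  (HfB : Bessel f) (HB : optimal_Bessel_bound f B)
  (Hcomp : exists g : nat -> H, Bessel g /\
     exists T : H -> H, compact_op T /\
       forall x, VstarU g f x (hsub x (T x))) :
  exists d : nat,
    has_dim (kerU f) d /\
    (forall (k : nat) (x : nat -> H), frame (prepend k x f) -> (d <= k)%nat) /\
    (forall w : nat -> H, is_ONB_of (kerU f) d w ->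
       frame (prepend d (fun n => hscal H (RtoC (sqrt B)) (w n)) f)).
Proof.
  destruct HB as [HBb _].
  destruct (choice_fun _ HBb) as [Sf HSfB].
  assert (HSf : forall x, coef_sum f x (Sf x)) by apply HSfB.
  assert (HSB : forall x, Sf x <= B * normsq x) by apply HSfB.
  destruct Hcomp as [g [Hg [T [Hc HT]]]].
  destruct (Bessel_pos_bound g Hg) as [Bg [HBgp HBg]].
  destruct (Bessel_pos_bound f HfB) as [Bf [HBfp HBf]].
  destruct (compact_identity_finite_dim (kerU f) T (subsp_ker f) Hc (defect_fixes_ker g f T HT))
    as [d [w [Hon [Hwk Hsp]]]].
  exists d. split; [|split].
  - exists w. repeat split; auto using orthonormal_lin_indep.
  - intros k x Hfr. apply (frame_prepend_length f k x d w); auto using orthonormal_lin_indep.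
  - intros w' [Hwk' [Hon' Hsp']].
    destruct (analysis_bounded_below f g T Sf Bf Bg HSf HBf HBfp HBg HBgp Hc HT d w' Hon' Hwk' Hsp')
      as [c [Hc0 Hcr]].
    apply (frame_prepend_scaled_basis f Sf HSf d w' c B); auto.
    apply (lower_bound_le_upper_bound Sf d w'); auto.
Qed.
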